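(* Let $A$ be a module over a ring and let $A=\bigoplus_{i\in I}A_i$ be a direct decomposition of $A$. Then the endomorphism ring $\mathrm{End}\,A$ is centrally essential if and only if for every $i\in I$: (1) $A_i$ is a fully invariant submodule of $A$, and (2) the ring $\mathrm{End}\,A_i$ is centrally essential.
   Context: All rings are associative with identity. A ring $R$ is centrally essential if for every non-zero $a\in R$ there exist non-zero elements $x,y$ of the center of $R$ with $ax=y$. A submodule is fully invariant if it is mapped into itself by every endomorphism of $A$. *)

(* Submodules are
   predicates [A -> Prop]; the endomorphism ring of a submodule B of A is
   represented by maps A -> A that are R-linear on B and map B into B, two such
   maps being equal in End B iff they agree on B.  Ring multiplication in End B
   is composition, zero is the zero map. *)
From HB Require Import structures.
From mathcomp Require Import all_boot all_algebra.
Set Implicit Arguments. Unset Strict Implicit. Unset Printing Implicit Defensive.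
Import GRing.Theory.
Local Open Scope ring_scope.

Section Defs.
Variables (R : pzRingType) (A : lmodType R).

Definition submodule (B : A -> Prop) : Prop :=
  [/\ B 0, (forall x y, B x -> B y -> B (x + y)) & (forall (r : R) x, B x -> B (r *: x))].

Definition endo_of (B : A -> Prop) (f : A -> A) : Prop :=
  [/\ (forall x y, B x -> B y -> f (x + y) = f x + f y),
      (forall (r : R) x, B x -> f (r *: x) = r *: f x)
    & (forall x, B x -> B (f x))].

Definition eq_on (B : A -> Prop) (f g : A -> A) : Prop := forall x, B x -> f x = g x.

Definition central_endo (B : A -> Prop) (c : A -> A) : Prop :=
  endo_of B c /\ forall g, endo_of B g -> eq_on B (c \o g) (g \o c).

Definition End_centrally_essential (B : A -> Prop) : Prop :=
  forall a, endo_of B a -> ~ eq_on B a (fun _ => 0) ->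
    exists x y, [/\ central_endo B x, central_endo B y,
                    ~ eq_on B x (fun _ => 0), ~ eq_on B y (fun _ => 0)
                  & eq_on B (a \o x) y].

Definition fully_invariant (B : A -> Prop) : Prop :=
  forall f, endo_of (fun _ => True) f -> forall x, B x -> B (f x).

Definition direct_decomposition (I : eqType) (Ai : I -> A -> Prop) : Prop :=
  [/\ (forall i, submodule (Ai i)),
      (forall x : A, exists (s : seq I) (f : I -> A),
          (forall i, Ai i (f i)) /\ x = \sum_(i <- s) f i)
    & (forall (s : seq I) (f : I -> A), uniq s -> (forall i, i \in s -> Ai i (f i)) ->
          \sum_(i <- s) f i = 0 -> forall i, i \in s -> f i = 0)].
End Defs.

From mathcomp Require Import all_boot all_algebra.
From Stdlib Require Import ClassicalEpsilon Classical.
Set Implicit Arguments. Unset Strict Implicit. Unset Printing Implicit Defensive.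
Import GRing.Theory.
Local Open Scope ring_scope.

(* In a centrally essential ring every idempotent e is left semicentral
   (a e = e a e): otherwise c = (1 - e) a e is nonzero, and a nonzero central
   multiple y = c x of it satisfies y = y e = e y = e c x = 0.  Hence each A_i
   is fully invariant, so every endomorphism of A commutes with every pi_i,
   i.e. the pi_i are central.  For a central idempotent e with range B,
   restriction to B and composition with e move central elements back and
   forth between End A and End B, and with them nonzero central multiples. *)

Section Endomorphisms.
Variables (R : pzRingType) (A : lmodType R).
Implicit Types (B : A -> Prop) (a e f g : A -> A).

Local Notation endoA := (endo_of (fun _ : A => True)).

Section Submodule.
Variables (B : A -> Prop) (subB : submodule B).

Lemma submod0 : B 0. Proof. by case: subB. Qed.

Lemma submodD x y : B x -> B y -> B (x + y). Proof. by case: subB => _ + _; apply. Qed.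

Lemma submodZ r x : B x -> B (r *: x). Proof. by case: subB => _ _; apply. Qed.

Lemma submodN x : B x -> B (- x). Proof. by rewrite -scaleN1r; apply: submodZ. Qed.

Lemma submod_sum (T : Type) (s : seq T) (P : pred T) (F : T -> A) :
  (forall t, P t -> B (F t)) -> B (\sum_(t <- s | P t) F t).
Proof. by move=> BF; apply: (big_ind B) => //; [apply: submod0 | apply: submodD]. Qed.

End Submodule.

Lemma endo0 B f : B 0 -> endo_of B f -> f 0 = 0.
Proof.
by move=> B0 [fD _ _]; apply: (addrI (f 0)); rewrite -fD // !addr0.
Qed.

Lemma endo_sum f (T : Type) (s : seq T) (P : pred T) (F : T -> A) :
  endoA f -> f (\sum_(t <- s | P t) F t) = \sum_(t <- s | P t) f (F t).
Proof.
move=> fe; have f0 := endo0 Logic.I fe; case: fe => fD _ _.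
exact: (big_morph f (fun x y => fD x y Logic.I Logic.I) f0).
Qed.

Lemma endoB_apply f x y : endoA f -> f (x - y) = f x - f y.
Proof. by case=> fD fZ _; rewrite fD // -scaleN1r fZ // scaleN1r. Qed.

Lemma endoB f g : endoA f -> endoA g -> endoA (fun x => f x - g x).
Proof.
move=> [fD fZ _] [gD gZ _]; split=> // [x y _ _ | r x _].
  by rewrite fD // gD // opprD addrACA.
by rewrite fZ // gZ // scalerBr.
Qed.

Lemma endo_comp B g f : endo_of B g -> endoA f -> (forall x, B (f x)) -> endoA (g \o f).
Proof.
by move=> [gD gZ _] [fD fZ _] Bf; split=> //= [x y _ _ | r x _];
  rewrite ?fD ?fZ ?gD ?gZ.
Qed.

Lemma endo_restrict B f : endoA f -> (forall x, B x -> B (f x)) -> endo_of B f.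
Proof. by case=> fD fZ _ fB; split=> // *; [apply: fD | apply: fZ]. Qed.

Lemma central_endoC B c g z : central_endo B c -> endo_of B g -> B z -> c (g z) = g (c z).
Proof. by case=> _ cC gB Bz; apply: (cC g gB z Bz). Qed.

Definition central_multiple B a : Prop :=
  exists x y, [/\ central_endo B x, central_endo B y,
                  ~ eq_on B x (fun _ => 0), ~ eq_on B y (fun _ => 0)
                & eq_on B (a \o x) y].

Lemma centrally_essential_idempotent_semicentral e a :
  End_centrally_essential (fun _ : A => True) -> endoA e -> (forall x, e (e x) = e x) ->
  endoA a -> forall x, a (e x) = e (a (e x)).
Proof.
move=> CE ee eK ae.
pose c x := a (e x) - e (a (e x)).
have aee : endoA (a \o e) := endo_comp ae ee (fun _ => Logic.I).
have ce : endoA c := endoB aee (endo_comp ee aee (fun _ => Logic.I)).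
have ec x : e (c x) = 0 by rewrite endoB_apply // eK subrr.
have cE x : c (e x) = c x by rewrite /c eK.
suff c0 : eq_on (fun _ => True) c (fun _ => 0).
  by move=> x; apply/eqP; rewrite -subr_eq0; apply/eqP/c0.
apply: NNPP => /(CE c ce) [x [y [xC yC _ yn cxy]]].
apply: yn => w _.
rewrite -cxy //= -cE -(central_endoC xC) // [c _]cxy //.
by rewrite (central_endoC yC) // -cxy //= ec.
Qed.

Definition projection_onto B e : Prop :=
  [/\ endoA e, forall x, B (e x) & forall x, B x -> e x = x].

Lemma projection_range_fully_invariant B e :
  End_centrally_essential (fun _ : A => True) -> projection_onto B e -> fully_invariant B.
Proof.
move=> CE [ee eB eid] a ae x Bx.
have eK y : e (e y) = e y by apply/eid/eB.
by rewrite -(eid x) // (centrally_essential_idempotent_semicentral CE ee eK ae).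
Qed.

Section CentralProjection.
Variables (B : A -> Prop) (e : A -> A).
Hypotheses (eB : projection_onto B e) (eC : central_endo (fun _ => True) e).

Lemma central_projection_fully_invariant : fully_invariant B.
Proof.
case: eB => _ inB eid a ae x Bx.
by rewrite -(eid x) // -(central_endoC eC).
Qed.

Let FI := central_projection_fully_invariant.

Lemma central_endo_restrict x : central_endo (fun _ => True) x -> central_endo B x.
Proof.
case: eB => ee inB eid xC; have xB := FI (proj1 xC).
split=> [|g gB w Bw /=]; first exact: endo_restrict (proj1 xC) xB.
have geA := endo_comp gB ee inB.
have := central_endoC (z := w) xC geA Logic.I.
by rewrite /= !eid //; apply: xB.
Qed.

Lemma central_endo_lift z : central_endo B z -> central_endo (fun _ => True) (z \o e).
Proof.
case: eB => ee inB _ zC; split; first exact: endo_comp (proj1 zC) ee inB.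
move=> g ge w _ /=.
by rewrite (central_endoC eC) // (central_endoC zC) //; apply/endo_restrict/FI.
Qed.

Lemma centrally_essential_restrict :
  End_centrally_essential (fun _ : A => True) -> End_centrally_essential B.
Proof.
case: eB => ee inB eid CE a aB an.
have aeA : endoA (a \o e) := endo_comp aB ee inB.
have aen : ~ eq_on (fun _ => True) (a \o e) (fun _ => 0).
  by move=> h; apply: an => w Bw; rewrite -(h w Logic.I) /= eid.
have [x [y [xC yC _ yn axy]]] := CE _ aeA aen.
have xE w : x (e w) = e (x w) := central_endoC (z := w) xC ee Logic.I.
have xB : forall w, B w -> B (x w) := FI (proj1 xC).
have Bxy w : B w -> a (x w) = y w by move=> Bw; rewrite -axy //= eid //; apply: xB.
exists x, y; split; try exact: central_endo_restrict.
- move=> x0; apply: yn => w _.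
  have B0 : B 0 by rewrite -(endo0 Logic.I ee).
  by rewrite -axy //= -xE x0 // (endo0 B0 aB).
- move=> y0; apply: yn => w _.
  have -> : y w = y (e w) by rewrite -!axy //= xE [e (e _)]eid //; apply: inB.
  exact/y0/inB.
- by move=> w Bw; apply: Bxy.
Qed.

Lemma central_multiple_lift a :
  End_centrally_essential B -> endoA a -> ~ eq_on B a (fun _ => 0) ->
  central_multiple (fun _ => True) a.
Proof.
case: eB => ee inB eid CE ae an.
have [x [y [xC yC xn yn axy]]] := CE a (endo_restrict ae (FI ae)) an.
exists (x \o e), (y \o e); split; try exact: central_endo_lift.
- by move=> x0; apply: xn => w Bw; rewrite -(x0 w Logic.I) /= eid.
- by move=> y0; apply: yn => w Bw; rewrite -(y0 w Logic.I) /= eid.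
- by move=> w _; apply: axy.
Qed.

End CentralProjection.

Section DirectDecomposition.
Variables (I : eqType) (Ai : I -> A -> Prop).
Hypothesis decA : direct_decomposition Ai.

Let subA i : submodule (Ai i). Proof. by case: decA. Qed.

Definition decomposes x (s : seq (I * A)) : Prop :=
  (forall p, p \in s -> Ai p.1 p.2) /\ x = \sum_(p <- s) p.2.

Definition component i (s : seq (I * A)) : A := \sum_(p <- s | p.1 == i) p.2.

Lemma decomposes_exists x : exists s, decomposes x s.
Proof.
case: decA => _ /(_ x) [s [f [fA ->]]] _.
exists [seq (i, f i) | i <- s]; split; last by rewrite big_map.
by move=> p /mapP [i _ ->].
Qed.

Lemma component_mem i s : (forall p, p \in s -> Ai p.1 p.2) -> Ai i (component i s).
Proof.
move=> sA; rewrite /component big_seq_cond.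
by apply: submod_sum => // p /andP [/sA + /eqP <-].
Qed.

(* Regroup s by indices: the sum over the distinct indices of the components
   is the sum of s, so independence kills every component. *)
Lemma component_eq0 s : (forall p, p \in s -> Ai p.1 p.2) -> \sum_(p <- s) p.2 = 0 ->
  forall i, component i s = 0.
Proof.
move=> sA s0 i; set t := undup (map fst s).
have regroup : \sum_(j <- t) component j s = 0.
  rewrite -[RHS]s0 /component.
  under eq_bigr do rewrite big_mkcond.
  rewrite exchange_big; apply: eq_big_seq => p ps /=.
  rewrite -big_mkcond /= -big_filter.
  have -> : [seq j <- t | p.1 == j] = [:: p.1].
    rewrite -(filter_pred1_uniq (undup_uniq (map fst s)) (x := p.1)).
      by apply: eq_filter => j /=; rewrite eq_sym.
    by rewrite mem_undup map_f.
  by rewrite big_seq1.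
have [it | it] := boolP (i \in t).
  by case: decA => _ _ /(_ t _ (undup_uniq _) (fun j _ => component_mem j sA) regroup i it).
rewrite /component big_seq_cond big1 // => p /andP [ps /eqP ei].
by move: it; rewrite mem_undup -ei map_f.
Qed.

Definition is_component i x y : Prop := exists s, decomposes x s /\ y = component i s.

Definition proj i x : A := epsilon (inhabits 0) (is_component i x).

Lemma projE i x s : decomposes x s -> proj i x = component i s.
Proof.
move=> [sA xs].
have [s' [[s'A xs'] ->]] : is_component i x (proj i x).
  have [s' ds'] := decomposes_exists x.
  by apply: (epsilon_spec (inhabits 0) (is_component i x)); exists (component i s'), s'.
pose u := s' ++ [seq (p.1, - p.2) | p <- s].
have : component i u = 0.
  apply: component_eq0; last by rewrite big_cat big_map /= sumrN -xs -xs' subrr.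
  move=> p; rewrite mem_cat => /orP [/s'A // | /mapP [q qs ->] /=].
  exact/(submodN (subA _))/sA.
by rewrite /component big_cat big_map /= sumrN => /eqP; rewrite subr_eq0 => /eqP.
Qed.

Lemma proj_mem i x : Ai i (proj i x).
Proof.
have [s [sA xs]] := decomposes_exists x.
by rewrite (projE i (conj sA xs)); apply: component_mem.
Qed.

Lemma proj_id i x : Ai i x -> proj i x = x.
Proof.
move=> xA; have dx : decomposes x [:: (i, x)].
  by split=> [p /[!inE] /eqP -> /= |]; rewrite ?big_seq1.
by rewrite (projE i dx) /component big_cons big_nil /= eqxx addr0.
Qed.

Lemma proj_endo i : endoA (proj i).
Proof.
split=> // [x y _ _ | r x _].
  have [s [sA xs]] := decomposes_exists x; have [t [tA yt]] := decomposes_exists y.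
  have dxy : decomposes (x + y) (s ++ t).
    split; last by rewrite big_cat xs yt.
    by move=> p; rewrite mem_cat => /orP [/sA | /tA].
  by rewrite (projE i (conj sA xs)) (projE i (conj tA yt)) (projE i dxy) /component big_cat.
have [s [sA xs]] := decomposes_exists x.
have drx : decomposes (r *: x) [seq (p.1, r *: p.2) | p <- s].
  split; last by rewrite big_map xs scaler_sumr.
  by move=> p /mapP [q qs ->] /=; apply/(submodZ (subA _))/sA.
by rewrite (projE i (conj sA xs)) (projE i drx) /component big_map scaler_sumr.
Qed.

Lemma proj_projection i : projection_onto (Ai i) (proj i).
Proof. by split; [apply: proj_endo | apply: proj_mem | apply: proj_id]. Qed.

Lemma proj_central i : (forall j, fully_invariant (Ai j)) ->
  central_endo (fun _ => True) (proj i).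
Proof.
move=> FI; split=> [|g ge x _ /=]; first exact: proj_endo.
have [s [sA xs]] := decomposes_exists x.
have dgx : decomposes (g x) [seq (p.1, g p.2) | p <- s].
  split; last by rewrite big_map xs endo_sum.
  by move=> p /mapP [q qs ->] /=; apply/(FI _ g ge)/sA.
by rewrite (projE i (conj sA xs)) (projE i dgx) /component big_map endo_sum.
Qed.

Lemma endo_nonzero_on_summand a : endoA a -> ~ eq_on (fun _ => True) a (fun _ => 0) ->
  exists i x, Ai i x /\ a x <> 0.
Proof.
move=> ae an; apply: NNPP => none; apply: an => x _.
have [s [sA ->]] := decomposes_exists x.
rewrite endo_sum // big_seq big1 // => p ps.
by apply: NNPP => ap; apply: none; exists p.1, p.2; split => //; apply: sA.
Qed.

End DirectDecomposition.

End Endomorphisms.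

Theorem lemma2p1 (R : pzRingType) (A : lmodType R) (I : eqType) (Ai : I -> A -> Prop) :
  direct_decomposition Ai ->
  (End_centrally_essential (fun _ : A => True) <->
   (forall i, fully_invariant (Ai i) /\ End_centrally_essential (Ai i))).
Proof.
move=> decA; have projA := proj_projection decA.
split=> [CE | FI_CE].
- have FI j : fully_invariant (Ai j) := projection_range_fully_invariant CE (projA j).
  move=> i; split=> //.
  exact: centrally_essential_restrict (projA i) (proj_central decA i FI) CE.
- have FI j : fully_invariant (Ai j) := (FI_CE j).1.
  move=> a ae an.
  have [i [x [xA ax]]] := endo_nonzero_on_summand decA ae an.
  have ai : ~ eq_on (Ai i) a (fun _ => 0) by move=> a0; apply/ax/a0.
  exact (central_multiple_lift (projA i) (proj_central decA i FI) (FI_CE i).2 ae ai).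
Qed.
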